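(* Let $G$ consist of two parallel paths $P_1,P_2$ from $s$ to $d$ with $l_{P_1}<l_{P_2}$. Suppose the dynamics is governed by the linear decision rule, that the exogenous inputs are constant and positive, $f_s(t)=\bar f>0$ and $b_d(t)=\bar b>0$ for all $t\ge 0$, and that the initial pheromone level $p_{uv}(0)$ is positive for every edge $(u,v)\in P_1$ (the initial pheromone levels on $P_2$ and all initial flows at internal vertices are arbitrary nonnegative numbers). Then there exist constants $C_1,C_2>0$, depending on $\delta,\bar f,\bar b$, the leakage parameters, the path lengths and the initial configuration, but not on $\epsilon$, such that for every $\epsilon\in(0,1)$ and every integer $t\ge C_1+C_2\log(1/\epsilon)$ we have $\nu^f_{uv}(t)\ge 1-\epsilon$ and $\nu^b_{uv}(t)\ge 1-\epsilon$ for every edge $(u,v)\in P_1$.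
   Context: Model. $G=(V,E)$ is a finite directed graph with a source vertex $s$ and a destination vertex $d$. Time is discrete, $t=0,1,2,\dots$. The state at time $t$ consists of pheromone levels $p_{uv}(t)\ge 0$ for $(u,v)\in E$, forward flows $f_v(t)\ge 0$ and backward flows $b_v(t)\ge0$ for $v\in V$. Each vertex $v$ has a leakage parameter $l_v\in[0,1]$, and $\delta\in(0,1)$ is a fixed decay parameter. The values $f_s(t)$ and $b_d(t)$ are exogenous inputs (the flow newly appearing at $s$ and at $d$ at time $t$); all other flows are determined by the dynamics from the initial state. Linear decision rule: $f_{uv}(t)=f_u(t)\,p_{uv}(t)/\sum_{z:(u,z)\in E}p_{uz}(t)$ and $b_{uv}(t)=b_v(t)\,p_{uv}(t)/\sum_{z:(z,v)\in E}p_{zv}(t)$, with the convention that at a vertex with a single outgoing (resp. incoming) edge the entire forward (resp. backward) flow is sent along that edge. Updates: for $v\neq s$, $f_v(t+1)=(1-l_v)\sum_{z:(z,v)\in E}f_{zv}(t)$; for $u\ne d$, $b_u(t+1)=(1-l_u)\sum_{z:(u,z)\in E}b_{uz}(t)$; and $p_{uv}(t+1)=\delta\,(p_{uv}(t)+f_{uv}(t)+b_{uv}(t))$ for all $(u,v)\in E$. Normalized pheromone levels: $\nu^f_{uv}(t)=p_{uv}(t)/\sum_{z:(u,z)\in E}p_{uz}(t)$ and $\nu^b_{uv}(t)=p_{uv}(t)/\sum_{z:(z,v)\in E}p_{zv}(t)$. For a path $P$ from $s$ to $d$, its leakage is $l_P=1-\prod_{v\in P\setminus\{s,d\}}(1-l_v)$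 and its length $\mathrm{len}(P)$ is its number of edges. Two parallel paths: $G$ is the union of two directed paths $P_1,P_2$ from $s$ to $d$ that share no vertices other than $s$ and $d$. *)

From HB Require Import structures.
From mathcomp Require Import all_boot all_order all_algebra.
From mathcomp Require Import all_classical all_reals all_analysis.

Set Implicit Arguments.
Unset Strict Implicit.
Unset Printing Implicit Defensive.

Import Order.TTheory GRing.Theory Num.Theory.
Local Open Scope ring_scope.

Section Model.
Variables (R : realType) (V : finType) (E : rel V) (s d : V).

(* State at a time t: pheromone levels p_{uv} (only meaningful on edges),
   forward flows f_v and backward flows b_v. *)
Record state := State {
  ph : V -> V -> R;
  fw : V -> R;
  bw : V -> R }.

Definition outdeg (u : V) : nat := #|[pred z | E u z]|.
Definition indeg (v : V) : nat := #|[pred z | E z v]|.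

Definition fedge (st : state) (u v : V) : R :=
  if E u v then
    (if outdeg u == 1%N then fw st u
     else fw st u * ph st u v / \sum_(z | E u z) ph st u z)
  else 0.

Definition bedge (st : state) (u v : V) : R :=
  if E u v then
    (if indeg v == 1%N then bw st v
     else bw st v * ph st u v / \sum_(z | E z v) ph st z v)
  else 0.

Variables (l : V -> R) (delta : R) (fs bd : nat -> R).

(* One step of the dynamics, from time t to time t+1; [fs] and [bd] are
   the exogenous inputs f_s(.) and b_d(.). *)
Definition step (t : nat) (st : state) : state :=
  State (fun u v => delta * (ph st u v + fedge st u v + bedge st u v))
        (fun v => if v == s then fs t.+1
                  else (1 - l v) * \sum_(z | E z v) fedge st z v)
        (fun u => if u == d then bd t.+1
                  else (1 - l u) * \sum_(z | E u z) bedge st u z).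

(* The trajectory from initial pheromones [p0] and initial flows [f0], [b0]
   (f_s(0) and b_d(0) are the exogenous inputs at time 0). *)
Fixpoint traj (p0 : V -> V -> R) (f0 b0 : V -> R) (t : nat) : state :=
  match t with
  | 0%N => State p0 (fun v => if v == s then fs 0 else f0 v)
                    (fun u => if u == d then bd 0 else b0 u)
  | t'.+1 => step t' (traj p0 f0 b0 t')
  end.

Definition nuf (st : state) (u v : V) : R :=
  ph st u v / \sum_(z | E u z) ph st u z.
Definition nub (st : state) (u v : V) : R :=
  ph st u v / \sum_(z | E z v) ph st z v.

End Model.

(* A path from [x] is represented by the sequence [p] of vertices following
   [x]; (u,v) is an edge of the path iff it is a pair of consecutive
   vertices of [x :: p]. *)
Definition path_edge (V : eqType) (x : V) (p : seq V) (u v : V) : bool :=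
  (u, v) \in zip (x :: p) p.

Definition two_parallel_paths (V : finType) (E : rel V) (s d : V)
    (p1 p2 : seq V) : Prop :=
  s != d /\
  [/\ [/\ path E s p1, last s p1 = d & uniq (s :: p1)],
      [/\ path E s p2, last s p2 = d & uniq (s :: p2)],
      (forall x, x \in p1 -> x \in p2 -> x = d),
      (forall u v, E u v = path_edge s p1 u v || path_edge s p2 u v) &
      (forall v, [|| v == s, v \in p1 | v \in p2])].

Definition pathleak (R : realType) (V : eqType) (l : V -> R) (d : V)
    (p : seq V) : R :=
  1 - \prod_(v <- p | v != d) (1 - l v).

From HB Require Import structures.
From mathcomp Require Import all_boot all_order all_algebra.
From mathcomp Require Import all_classical all_reals all_analysis.
From mathcomp Require Import ring lra zify.

Set Implicit Arguments.
Unset Strict Implicit.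
Unset Printing Implicit Defensive.

Import Order.TTheory GRing.Theory Num.Theory.
Local Open Scope ring_scope.

(* Interior vertices of the two paths P1, P2 have in- and out-degree 1, so their
   normalized levels are 1 and flows cross P_i without splitting, arriving
   L_i = |P_i| - 1 steps later, attenuated by the transmission
   a_i = prod (1 - l_v) over the interior of P_i (here a2 < a1).  Only four
   pheromones matter: A, B on the first edges of P1, P2 and C, D on their last
   edges.  Writing x = A / (A + B), y = C / (C + D), from time max L_i on,
     A' = delta (A + f x + b a1 y(t - L1)),  B' = delta (B + f (1 - x) + b a2 (1 - y(t - L2))),
   and symmetrically for C, D with the roles of (f, x) and (b, y) swapped. *)

(* The share of [P] among two levels [P], [Q]; at a vertex with two edges this
   is the normalized pheromone level of the first one. *)
Definition share (R : numFieldType) (P Q : R) : R := P / (P + Q).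

Lemma share_in01 (R : realFieldType) (P Q : R) : 0 < P -> 0 <= Q -> 0 < share P Q <= 1.
Proof.
move=> P0 Q0; rewrite /share divr_gt0 ?ler_pdivrMr /=; lra.
Qed.

Lemma shareZ (R : numFieldType) (k P Q : R) : k != 0 -> share (k * P) (k * Q) = share P Q.
Proof. by move=> k0; rewrite /share -mulrDr invfM mulrACA divff // mul1r. Qed.

Lemma scaled_weight (R : realDomainType) (w a z : R) :
  0 <= w -> 0 <= a <= 1 -> 0 <= z <= 1 -> 0 <= w * a * z <= w.
Proof.
move=> w0 /andP[a0 a1] /andP[z0 z1].
by rewrite !mulr_ge0 //= -mulrA ler_piMr // ?mulr_ge0 // mulr_ile1.
Qed.

(* One step of the recursion at an endpoint.  If the current share and the
   shares [u], [v] carried by the returning flows are all >= m, and the mass is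
   bounded by [M], the returning flows favour [P] by b (a1 - a2) >= c M, so the
   new gap is at most (1 - m) (1 - c m). *)
Lemma contraction_step (R : realFieldType) (P Q f b a1 a2 u v m c M : R) :
  0 < P -> 0 <= Q -> 0 <= m <= 1 -> m <= share P Q -> m <= u <= 1 -> m <= v <= 1 ->
  0 <= a2 <= a1 -> a1 <= 1 -> 0 <= b -> 0 <= f ->
  P + Q + f + 2 * b <= M -> 0 <= c -> c * M <= b * (a1 - a2) ->
  1 - share (P + f * share P Q + b * a1 * u) (Q + f * (1 - share P Q) + b * a2 * (1 - v))
  <= (1 - m) * (1 - c * m).
Proof.
move=> P0 Q0 /andP[m0 m1] mx /andP[mu u1] /andP[mv v1] /andP[a20 a21] a11 b0 f0 hM c0 hc.
set x := share P Q in mx *; set N := P + f * x + b * a1 * u.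
set Dn := P + Q + f + b * a1 * u + b * a2 * (1 - v).
have x1 : x <= 1 by have /andP[] := share_in01 P0 Q0.
have PE : P = x * (P + Q) by rewrite /x /share divfK //; apply: lt0r_neq0; lra.
have ba1u : 0 <= b * a1 * u <= b by apply: scaled_weight => //; lra.
have ba2v : 0 <= b * a2 * (1 - v) <= b by apply: scaled_weight => //; lra.
have Dn0 : 0 < Dn by rewrite /Dn; lra.
have DnM : Dn <= M by rewrite /Dn; lra.
have -> : 1 - share N (Q + f * (1 - x) + b * a2 * (1 - v)) = (Dn - N) / Dn.
  rewrite /share /N /Dn; field; apply: lt0r_neq0; rewrite /Dn in Dn0; lra.
rewrite ler_pdivrMr //.
(* The new share exceeds m by at least m (1 - m) b (a1 - a2) / Dn. *)
have gain : m * (1 - m) * (b * (a1 - a2)) <= N - m * Dn.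
  have -> : N - m * Dn = (x - m) * (P + Q + f) + b * a1 * (u * (1 - m)) - m * b * a2 * (1 - v).
    by rewrite /N /Dn {1}PE; ring.
  have slack_x : 0 <= (x - m) * (P + Q + f) by rewrite mulr_ge0 //; lra.
  have gain_u : b * a1 * (m * (1 - m)) <= b * a1 * (u * (1 - m)).
    by apply: ler_wpM2l; [rewrite mulr_ge0 | apply: ler_wpM2r]; lra.
  have loss_v : m * b * a2 * (1 - v) <= m * b * a2 * (1 - m).
    by apply: ler_wpM2l; [rewrite !mulr_ge0 | ]; lra.
  have -> : m * (1 - m) * (b * (a1 - a2)) = b * a1 * (m * (1 - m)) - m * b * a2 * (1 - m) by ring.
  lra.
have cDn : c * Dn <= b * (a1 - a2) by apply: le_trans hc; rewrite ler_wpM2l.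
have mm : 0 <= m * (1 - m) by rewrite mulr_ge0 //; lra.
have := ler_wpM2l mm cDn.
have -> : (1 - m) * (1 - c * m) * Dn = Dn - m * Dn - m * (1 - m) * (c * Dn) by ring.
lra.
Qed.

Lemma decaying_mass_bound (R : realFieldType) (K : nat) (dl h : R) (P : nat -> R) :
  0 < dl < 1 -> 0 <= h -> (forall t, 0 <= P t) ->
  (forall t, (K <= t)%N -> P t.+1 <= dl * (P t + h)) ->
  forall t, (K <= t)%N -> P t <= P K + h / (1 - dl).
Proof.
move=> /andP[dl0 dl1] h0 P0 hP.
have hK : 0 <= h / (1 - dl) by rewrite divr_ge0 //; lra.
have fix_pt : dl * (P K + h / (1 - dl) + h) <= P K + h / (1 - dl).
  have e : h / (1 - dl) * (1 - dl) = h by rewrite divfK //; apply: lt0r_neq0; lra.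
  have : 0 <= (1 - dl) * P K by apply: mulr_ge0 => //; lra.
  have : dl * h <= h by rewrite ler_piMl //; lra.
  lra.
elim=> [|t IH]; first by rewrite leqn0 => /eqP <-; lra.
rewrite leq_eqVlt => /orP[/eqP <-|ltK]; first by lra.
apply: le_trans (hP _ ltK) (le_trans _ fix_pt).
by rewrite ler_wpM2l ?lerD2r ?IH //; lra.
Qed.

Lemma finite_pos_lower_bound (R : realDomainType) (F : nat -> R) (n : nat) :
  (forall i, 0 < F i) -> exists2 m, 0 < m & forall i, (i <= n)%N -> m <= F i.
Proof.
move=> F0; elim: n => [|n [m m0 hm]]; first by exists (F 0%N) => // i; rewrite leqn0 => /eqP ->.
exists (Num.min m (F n.+1)); first by rewrite lt_min m0 F0.
move=> i; rewrite leq_eqVlt => /orP[/eqP ->|hi]; first by rewrite ge_min lexx orbT.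
by rewrite ge_min hm.
Qed.

Lemma geometric_log_time (R : realType) (rho : R) (N : nat) : 0 < rho < 1 ->
  exists C1 C2 : R, 0 < C1 /\ 0 < C2 /\
    forall eps : R, 0 < eps < 1 ->
    forall t : nat, C1 + C2 * ln (eps^-1) <= t%:R -> rho ^+ (t %/ N.+1) < eps.
Proof.
move=> /andP[rho0 rho1].
have lnr : 0 < - ln rho by rewrite oppr_gt0 ln_lt0 // rho0.
have N0 : 0 < N.+1%:R :> R by rewrite ltr0n.
exists N.+1%:R, (N.+1%:R / (- ln rho)); split => //; split; first by rewrite divr_gt0.
move=> eps /andP[eps0 eps1] t ht; set n := (t %/ N.+1)%N.
have tn : t%:R < n%:R * N.+1%:R + N.+1%:R :> R.
  by rewrite -natrM -natrD ltr_nat addnC -mulSn ltn_ceil.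
have lneps : ln (eps^-1) < n%:R * (- ln rho).
  have h : N.+1%:R * (ln (eps^-1) / (- ln rho)) < N.+1%:R * n%:R.
    by rewrite mulrA mulrAC; lra.
  by rewrite ltr_pM2l // ltr_pdivrMr // in h.
rewrite -ltr_ln ?posrE ?exprn_gt0 // lnXn // -mulr_natl.
by move: lneps; rewrite lnV ?posrE //; lra.
Qed.

Lemma past_window (n K k t : nat) :
  (k <= K)%N -> (n.+1 * K.+1 <= t.+1)%N -> (K <= t)%N /\ (n * K.+1 <= t - k)%N.
Proof. by rewrite mulSn; move: (n * K.+1)%N => N; lia. Qed.

Section CoupledRecursion.
Variables (R : realType) (f b a1 a2 dl : R) (k1 k2 K : nat) (A B C D : nat -> R).
Hypotheses (hparams : [/\ 0 < dl < 1, 0 < f, 0 < b, 0 <= a2 < a1 & a1 <= 1])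
  (hk1 : (k1 <= K)%N) (hk2 : (k2 <= K)%N)
  (hA : forall t, 0 < A t) (hB : forall t, 0 <= B t)
  (hC : forall t, 0 < C t) (hD : forall t, 0 <= D t).

Local Notation x t := (share (A t) (B t)).
Local Notation y t := (share (C t) (D t)).

Hypothesis hrec : forall t, (K <= t)%N ->
  [/\ A t.+1 = dl * (A t + f * x t + b * a1 * y (t - k1)),
      B t.+1 = dl * (B t + f * (1 - x t) + b * a2 * (1 - y (t - k2))),
      C t.+1 = dl * (C t + b * y t + f * a1 * x (t - k1)) &
      D t.+1 = dl * (D t + b * (1 - y t) + f * a2 * (1 - x (t - k2)))].

Lemma x_in01 t : 0 < x t <= 1. Proof. exact: share_in01. Qed.
Lemma y_in01 t : 0 < y t <= 1. Proof. exact: share_in01. Qed.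

Lemma coupled_mass_bound : exists M : R, forall t, (K <= t)%N ->
  A t + B t + f + 2 * b <= M /\ C t + D t + b + 2 * f <= M.
Proof.
have [hdl hf hb /andP[a20 a21] ha1] := hparams; have [dl0 dl1] := andP hdl.
have hx t : 0 <= x t <= 1 by have /andP[] := x_in01 t; lra.
have hy t : 0 <= y t <= 1 by have /andP[] := y_in01 t; lra.
have hx' t : 0 <= 1 - x t <= 1 by have /andP[] := x_in01 t; lra.
have hy' t : 0 <= 1 - y t <= 1 by have /andP[] := y_in01 t; lra.
set h := 2 * (f + b); have h0 : 0 <= h by rewrite /h; lra.
have AB t : (K <= t)%N -> A t + B t <= A K + B K + h / (1 - dl).
  apply: (decaying_mass_bound (P := fun t => A t + B t)) => // [s|s hs].
    by have := hA s; have := hB s; lra.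
  have [-> -> _ _] := hrec hs; rewrite -mulrDr; apply: ler_wpM2l; first lra.
  have := scaled_weight (ltW hb) (ltac:(lra) : 0 <= a1 <= 1) (hy (s - k1)%N).
  have := scaled_weight (ltW hb) (ltac:(lra) : 0 <= a2 <= 1) (hy' (s - k2)%N).
  have := mulr_ge0 (ltW hf) (andP (hx s)).1.
  have := mulr_ge0 (ltW hf) (andP (hx' s)).1.
  rewrite /h; lra.
have CD t : (K <= t)%N -> C t + D t <= C K + D K + h / (1 - dl).
  apply: (decaying_mass_bound (P := fun t => C t + D t)) => // [s|s hs].
    by have := hC s; have := hD s; lra.
  have [_ _ -> ->] := hrec hs; rewrite -mulrDr; apply: ler_wpM2l; first lra.
  have := scaled_weight (ltW hf) (ltac:(lra) : 0 <= a1 <= 1) (hx (s - k1)%N).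
  have := scaled_weight (ltW hf) (ltac:(lra) : 0 <= a2 <= 1) (hx' (s - k2)%N).
  have := mulr_ge0 (ltW hb) (andP (hy s)).1.
  have := mulr_ge0 (ltW hb) (andP (hy' s)).1.
  rewrite /h; lra.
exists (A K + B K + C K + D K + h / (1 - dl) + h) => t ht.
have := AB t ht; have := CD t ht; have := hA K; have := hB K; have := hC K; have := hD K.
rewrite /h; lra.
Qed.

Local Notation above m t := (m <= x t /\ m <= y t).

(* By [contraction_step] and the mass bound, every step after time K shrinks
   the gaps at a rate c independent of t and m. *)
Lemma contraction : exists2 c : R, 0 < c < 1 & forall t m, (K <= t)%N -> 0 <= m <= 1 ->
  above m t -> above m (t - k1) -> above m (t - k2) ->
  1 - x t.+1 <= (1 - m) * (1 - c * m) /\ 1 - y t.+1 <= (1 - m) * (1 - c * m).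
Proof.
have [hdl hf hb ha ha1] := hparams; have [dl0 dl1] := andP hdl; have [a20 a21] := andP ha.
have [M hM] := coupled_mass_bound.
have M0 : f + b < M by have [h _] := hM K (leqnn K); have := hA K; have := hB K; lra.
have fb0 : 0 < Num.min f b by rewrite lt_min hf hb.
have fbf : Num.min f b <= f by rewrite ge_min lexx.
have fbb : Num.min f b <= b by rewrite ge_min lexx orbT.
pose c := (a1 - a2) * Num.min f b / M.
have cM : c * M = (a1 - a2) * Num.min f b by rewrite /c divfK //; apply: lt0r_neq0; lra.
have c0 : 0 < c by rewrite /c divr_gt0 ?mulr_gt0 //; lra.
have cb : c * M <= b * (a1 - a2) by rewrite cM mulrC ler_wpM2r //; lra.
have cf : c * M <= f * (a1 - a2) by rewrite cM mulrC ler_wpM2r //; lra.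
have c1 : c < 1.
  rewrite -(ltr_pM2r (_ : 0 < M)) ?mul1r ?cM; last lra.
  have : (a1 - a2) * Num.min f b <= Num.min f b by rewrite ler_piMl //; lra.
  lra.
exists c; first by rewrite c0 c1.
move=> t m ht hm [mx my] [mx1 my1] [mx2 my2].
have [eA eB eC eD] := hrec ht; have [MAB MCD] := hM t ht.
have inx s : m <= x s -> m <= x s <= 1 by move=> ->; case/andP: (x_in01 s).
have iny s : m <= y s -> m <= y s <= 1 by move=> ->; case/andP: (y_in01 s).
have ha' : 0 <= a2 <= a1 by rewrite a20 ltW.
split.
  rewrite eA eB shareZ ?lt0r_neq0 //.
  apply: (@contraction_step _ (A t) (B t) f b a1 a2 (y (t - k1)) (y (t - k2)) m c M) => //;
    by [apply: ltW | apply: iny].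
rewrite eC eD shareZ ?lt0r_neq0 //.
apply: (@contraction_step _ (C t) (D t) b f a1 a2 (x (t - k1)) (x (t - k2)) m c M) => //;
  by [apply: ltW | apply: inx].
Qed.

(* A lower bound of all shares up to time K persists forever, since a step
   can only shrink the gaps. *)
Lemma uniform_lower_bound : exists2 m0 : R, 0 < m0 <= 1 & forall t, above m0 t.
Proof.
have [c /andP[c0 c1] hc] := contraction.
have [m0 m0pos hm0] : exists2 m0, 0 < m0 & forall i, (i <= K)%N -> above m0 i.
  have pos i : 0 < Num.min (x i) (y i).
    by rewrite lt_min; case/andP: (x_in01 i) => -> _; case/andP: (y_in01 i).
  have [m m0 hm] := finite_pos_lower_bound K pos.
  by exists m => // i /hm; rewrite le_min => /andP.
have m01 : m0 <= 1 by have [h _] := hm0 0%N (leq0n K); have /andP[] := x_in01 0; lra.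
exists m0; first by rewrite m0pos.
elim/ltn_ind => t IH; case: (leqP t K) => [/hm0 //|].
case: t IH => [//|t] IH Kt.
have hm : 0 <= m0 <= 1 by rewrite ltW.
have past k : (t - k < t.+1)%N by rewrite ltnS leq_subr.
have [hx hy] := hc t m0 Kt hm (IH t (ltnSn t)) (IH _ (past k1)) (IH _ (past k2)).
have : (1 - m0) * (1 - c * m0) <= 1 - m0.
  by rewrite ler_piMr ?subr_ge0 //; have := mulr_gt0 c0 m0pos; lra.
by split; lra.
Qed.

(* With the uniform bound m0 the gaps shrink by rho = 1 - c m0 every K + 1
   steps: the delayed shares at time t only look back at most K steps. *)
Lemma geometric_decay : exists2 rho : R, 0 < rho < 1 &
  forall n t, (n * K.+1 <= t)%N -> 1 - x t <= rho ^+ n /\ 1 - y t <= rho ^+ n.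
Proof.
have [c /andP[c0 c1] hc] := contraction.
have [m0 /andP[m0pos m01] hm0] := uniform_lower_bound.
pose rho := 1 - c * m0.
have cm0 : 0 < c * m0 <= c by rewrite mulr_gt0 // ler_piMr // ltW.
have rho01 : 0 < rho < 1 by apply/andP; split; rewrite /rho; lra.
exists rho => // n; have /andP[rho0 rho1] := rho01.
elim: n => [|n IH] t ht.
  by rewrite expr0; have /andP[? _] := x_in01 t; have /andP[? _] := y_in01 t; split; lra.
case: t ht => [|t ht]; first by rewrite mulSn addSn.
have rn : 0 <= rho ^+ n <= 1 by rewrite exprn_ge0 ?exprn_ile1 // ltW.
(* The better of the two available lower bounds on the shares. *)
pose m := Num.max m0 (1 - rho ^+ n).
have hm : 0 <= m <= 1 by rewrite ge_max le_max (ltW m0pos) m01 /=; lra.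
have above_m s : (n * K.+1 <= s)%N -> above m s.
  move=> hs; have [? ?] := IH s hs; have [? ?] := hm0 s.
  by rewrite !ge_max; split; apply/andP; split; lra.
have [Kt nt] := past_window (leq0n K) ht; rewrite subn0 in nt.
have [_ nt1] := past_window hk1 ht; have [_ nt2] := past_window hk2 ht.
have [hx hy] := hc t m Kt hm (above_m t nt) (above_m _ nt1) (above_m _ nt2).
have : (1 - m) * (1 - c * m) <= rho ^+ n * rho.
  have mm0 : m0 <= m by rewrite le_max lexx.
  have : c * m0 <= c * m by rewrite ler_pM2l.
  have : c * m <= c by rewrite ler_piMr //; lra.
  have : 1 - rho ^+ n <= m by rewrite le_max lexx orbT.
  by move=> *; apply: ler_pM; rewrite /rho; lra.
by rewrite exprSr; split; lra.
Qed.

Theorem coupled_convergence : exists C1 C2 : R, 0 < C1 /\ 0 < C2 /\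
  forall eps : R, 0 < eps < 1 ->
  forall t : nat, C1 + C2 * ln (eps^-1) <= t%:R -> 1 - eps <= x t /\ 1 - eps <= y t.
Proof.
have [rho hrho hdecay] := geometric_decay.
have [C1 [C2 [C10 [C20 hlog]]]] := geometric_log_time K hrho.
exists C1, C2; do 2!split => //.
move=> eps heps t ht; have := hlog eps heps t ht.
have [hx hy] := hdecay (t %/ K.+1)%N t (leq_trunc_div _ _).
by split; lra.
Qed.
End CoupledRecursion.

Definition simple_path (V : eqType) (s d : V) (q : seq V) : Prop :=
  [/\ s != d, last s q = d & uniq (s :: q)].

Definition pvert (V : eqType) (s : V) (q : seq V) (j : nat) : V := nth s (s :: q) j.

Lemma path_edgeP (V : eqType) (s : V) (q : seq V) (u v : V) :
  path_edge s q u v <->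
  exists j, [/\ (j < size q)%N, u = pvert s q j & v = pvert s q j.+1].
Proof.
rewrite /path_edge /pvert.
have sz : size (zip (s :: q) q) = size q by rewrite size_zip /=; lia.
split.
  move/(nthP (s, s)) => [i]; rewrite sz => hi.
  by rewrite nth_zip_cond sz hi => -[<- <-]; exists i.
move=> [j [hj -> ->]]; apply/(nthP (s, s)); exists j; first by rewrite sz.
by rewrite nth_zip_cond sz hj.
Qed.

Section SimplePath.
Variables (V : eqType) (s d : V) (q : seq V).
Hypothesis hq : simple_path s d q.

Lemma simple_path_size : (0 < size q)%N.
Proof. by case: hq => sd lq _; case: q lq sd => //= <-; rewrite eqxx. Qed.

Lemma pvert_last : pvert s q (size q) = d.
Proof. by case: hq => _ lq _; rewrite /pvert -last_nth. Qed.

Lemma pvert_inj i j : (i <= size q)%N -> (j <= size q)%N ->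
  pvert s q i = pvert s q j -> i = j.
Proof.
case: hq => _ _ u hi hj e; apply/eqP; rewrite -(nth_uniq s _ _ u) ?ltnS //.
by rewrite /pvert in e; rewrite e.
Qed.

Lemma pvert_mem j : (0 < j)%N -> (j <= size q)%N -> pvert s q j \in q.
Proof. by case: j => // j _ hj; apply: mem_nth. Qed.

Lemma pvert_eq_s j : (j <= size q)%N -> pvert s q j = s -> j = 0%N.
Proof. by move=> hj e; apply: pvert_inj => //; rewrite e. Qed.

Lemma pvert_eq_d j : (j <= size q)%N -> pvert s q j = d -> j = size q.
Proof. by move=> hj e; apply: pvert_inj => //; rewrite e pvert_last. Qed.

Lemma path_edge_from j z : (j < size q)%N ->
  path_edge s q (pvert s q j) z = (z == pvert s q j.+1).
Proof.
move=> hj; apply/idP/eqP; last by move=> ->; apply/path_edgeP; exists j.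
by case/path_edgeP => i [hi /esym/pvert_inj e ->]; rewrite e // ltnW.
Qed.

Lemma path_edge_to j z : (0 < j)%N -> (j <= size q)%N ->
  path_edge s q z (pvert s q j) = (z == pvert s q j.-1).
Proof.
case: j => // j _ hj; apply/idP/eqP; last by move=> ->; apply/path_edgeP; exists j.
by case/path_edgeP => i [hi -> /esym/pvert_inj e]; rewrite -e.
Qed.

Lemma last_edge_index : ((size q).-1 < size q)%N /\ (size q).-1.+1 = size q.
Proof. by have q0 := simple_path_size; rewrite ltn_predL prednK. Qed.

Lemma pvert_neq_s j : (0 < j)%N -> (j <= size q)%N -> pvert s q j != s.
Proof. by move=> j0 jL; apply/eqP => /(pvert_eq_s jL) j00; rewrite j00 in j0. Qed.

Lemma pvert_neq_d j : (j < size q)%N -> pvert s q j != d.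
Proof. by move=> jL; apply/eqP => /(pvert_eq_d (ltnW jL)) jj; rewrite jj ltnn in jL. Qed.

End SimplePath.

Lemma card_pred1 (V : finType) (P : pred V) a :
  (forall z, P z = (z == a)) -> #|P| = 1%N.
Proof. by move=> hP; rewrite (eq_card (B := pred1 a)) ?card1 // => z; rewrite hP. Qed.

Lemma card_pred2 (V : finType) (P : pred V) a b :
  a != b -> (forall z, P z = (z == a) || (z == b)) -> #|P| = 2%N.
Proof. by move=> ab hP; rewrite (eq_card (B := pred2 a b)) ?card2 ?ab // => z; rewrite hP. Qed.

Lemma sum_pred2 (R : nmodType) (V : finType) (P : pred V) (F : V -> R) a b :
  a != b -> (forall z, P z = (z == a) || (z == b)) -> \sum_(z | P z) F z = F a + F b.
Proof.
move=> ab hP; rewrite (bigD1 a) /=; last by rewrite hP eqxx.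
congr (_ + _); apply: big_pred1 => z /=; rewrite hP.
by case: (eqVneq z a) => [->|za] /=; rewrite ?andbF ?andbT // (negbTE ab).
Qed.

Section TwoPaths.
Variables (V : finType) (E : rel V) (s d : V) (q r : seq V).
Hypotheses (hq : simple_path s d q) (hr : simple_path s d r)
  (disj : forall x, x \in q -> x \in r -> x = d)
  (hE : forall u v, E u v = path_edge s q u v || path_edge s r u v).

(* An interior vertex of [q] is not on [r]: no [r]-edge leaves or enters it. *)
Lemma other_path_from j z : (0 < j)%N -> (j < size q)%N ->
  path_edge s r (pvert s q j) z = false.
Proof.
move=> j0 jL; apply/negP => /path_edgeP [[|i] [hi e _]].
  by move: (pvert_neq_s hq j0 (ltnW jL)); rewrite e eqxx.
have := disj (pvert_mem s j0 (ltnW jL)); rewrite e (pvert_mem s (ltn0Sn i) (ltnW hi)) => /(_ isT).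
by rewrite -e; apply/eqP/pvert_neq_d.
Qed.

Lemma other_path_to j z : (0 < j)%N -> (j < size q)%N ->
  path_edge s r z (pvert s q j) = false.
Proof.
move=> j0 jL; apply/negP => /path_edgeP [i [hi _ e]].
have := disj (pvert_mem s j0 (ltnW jL)); rewrite e (pvert_mem s (ltn0Sn i) hi) => /(_ isT).
by rewrite -e; apply/eqP/pvert_neq_d.
Qed.

Lemma out_interior j z : (0 < j)%N -> (j < size q)%N ->
  E (pvert s q j) z = (z == pvert s q j.+1).
Proof. by move=> j0 jL; rewrite hE other_path_from // orbF (path_edge_from hq). Qed.

Lemma in_interior j z : (0 < j)%N -> (j < size q)%N ->
  E z (pvert s q j) = (z == pvert s q j.-1).
Proof. by move=> j0 jL; rewrite hE other_path_to // orbF (path_edge_to hq) // ltnW. Qed.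

Lemma path_edge_E j : (j < size q)%N -> E (pvert s q j) (pvert s q j.+1).
Proof. by move=> jL; rewrite hE (path_edge_from hq) // eqxx. Qed.

Lemma out_source z : E s z = (z == pvert s q 1) || (z == pvert s r 1).
Proof.
by rewrite hE -[s]/(pvert s q 0) (path_edge_from hq) ?(simple_path_size hq) //
  -[s]/(pvert s r 0) (path_edge_from hr) ?(simple_path_size hr).
Qed.

Lemma in_sink z :
  E z d = (z == pvert s q (size q).-1) || (z == pvert s r (size r).-1).
Proof.
rewrite hE -{1}(pvert_last hq) (path_edge_to hq) ?(simple_path_size hq) //.
by rewrite -(pvert_last hr) (path_edge_to hr) ?(simple_path_size hr).
Qed.

Lemma outdeg_interior j : (0 < j)%N -> (j < size q)%N -> outdeg E (pvert s q j) = 1%N.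
Proof. by move=> j0 jL; apply: (card_pred1 (a := pvert s q j.+1)) => z; apply: out_interior. Qed.

Lemma indeg_interior j : (0 < j)%N -> (j < size q)%N -> indeg E (pvert s q j) = 1%N.
Proof. by move=> j0 jL; apply: (card_pred1 (a := pvert s q j.-1)) => z; apply: in_interior. Qed.

Lemma source_succ_neq : ~ (size q = 1 /\ size r = 1)%N -> pvert s q 1 != pvert s r 1.
Proof.
move=> not11; apply/eqP => e.
have q0 := simple_path_size hq; have r0 := simple_path_size hr.
have ed : pvert s q 1 = d.
  by apply: disj; [exact: pvert_mem | rewrite e; exact: pvert_mem].
apply: not11; split; first by rewrite -(pvert_eq_d hq q0 ed).
by rewrite -(pvert_eq_d hr r0 (etrans (esym e) ed)).
Qed.

Lemma sink_pred_neq : ~ (size q = 1 /\ size r = 1)%N ->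
  pvert s q (size q).-1 != pvert s r (size r).-1.
Proof.
move=> not11; apply/eqP => e.
have [iq qS] := last_edge_index hq; have [jr rS] := last_edge_index hr.
case: (posnP (size q).-1) => [i0|ip].
  have /(pvert_eq_s hr (ltnW jr)) j0 : pvert s r (size r).-1 = s by rewrite -e i0.
  by apply: not11; rewrite -qS -rS i0 j0.
case: (posnP (size r).-1) => [j0|jp].
  have /(pvert_eq_s hq (ltnW iq)) i0 : pvert s q (size q).-1 = s by rewrite e j0.
  by rewrite i0 in ip.
have cd : pvert s q (size q).-1 = d.
  apply: disj; first exact: (pvert_mem s ip (ltnW iq)).
  by rewrite e; exact: (pvert_mem s jp (ltnW jr)).
by move: (pvert_neq_d hq iq); rewrite cd eqxx.
Qed.

End TwoPaths.

Lemma fedge_ge0 (R : realType) (V : finType) (E : rel V) (st : state R V) u v :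
  (forall u v, E u v -> 0 <= ph st u v) -> (forall v, 0 <= fw st v) ->
  0 <= fedge E st u v.
Proof.
move=> hp hf; rewrite /fedge; case: ifP => // e; case: ifP => // _.
by rewrite divr_ge0 ?mulr_ge0 ?hp ?hf //; apply: sumr_ge0 => z /hp.
Qed.

Lemma bedge_ge0 (R : realType) (V : finType) (E : rel V) (st : state R V) u v :
  (forall u v, E u v -> 0 <= ph st u v) -> (forall v, 0 <= bw st v) ->
  0 <= bedge E st u v.
Proof.
move=> hp hb; rewrite /bedge; case: ifP => // e; case: ifP => // _.
by rewrite divr_ge0 ?mulr_ge0 ?hp ?hb //; apply: sumr_ge0 => z /hp.
Qed.

Section Dynamics.
Variables (R : realType) (V : finType) (E : rel V) (s d : V) (l : V -> R)
  (delta fbar bbar : R) (p0 : V -> V -> R) (f0 b0 : V -> R).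

Local Notation S t := (traj E s d l delta (fun _ => fbar) (fun _ => bbar) p0 f0 b0 t).

Lemma fw_source t : fw (S t) s = fbar.
Proof. by case: t => [|t] /=; rewrite eqxx. Qed.

Lemma bw_sink t : bw (S t) d = bbar.
Proof. by case: t => [|t] /=; rewrite eqxx. Qed.

Hypotheses (hl : forall v, 0 <= l v <= 1) (hdelta : 0 < delta)
  (hfbar : 0 <= fbar) (hbbar : 0 <= bbar) (hp0 : forall u v, E u v -> 0 <= p0 u v)
  (hf0 : forall v, 0 <= f0 v) (hb0 : forall v, 0 <= b0 v).

Lemma state_ge0 t : [/\ forall u v, E u v -> 0 <= ph (S t) u v,
   forall v, 0 <= fw (S t) v & forall v, 0 <= bw (S t) v].
Proof.
elim: t => [|t [hp hf hb]]; first by split => [u v /hp0|v|v] //=; case: ifP.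
have hl1 v : 0 <= 1 - l v by have /andP[_ h] := hl v; rewrite subr_ge0.
split => [u v e|v|v] /=.
- by apply: mulr_ge0; [exact: ltW | rewrite !addr_ge0 ?hp ?fedge_ge0 ?bedge_ge0].
- by case: ifP => // _; rewrite mulr_ge0 // sumr_ge0 // => z _; apply: fedge_ge0.
- by case: ifP => // _; rewrite mulr_ge0 // sumr_ge0 // => z _; apply: bedge_ge0.
Qed.

Lemma fedge_traj_ge0 t u v : 0 <= fedge E (S t) u v.
Proof. by have [? ? ?] := state_ge0 t; apply: fedge_ge0. Qed.

Lemma bedge_traj_ge0 t u v : 0 <= bedge E (S t) u v.
Proof. by have [? ? ?] := state_ge0 t; apply: bedge_ge0. Qed.

Lemma ph_traj_ge0 t u v : E u v -> 0 <= ph (S t) u v.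
Proof. by have [h _ _] := state_ge0 t; apply: h. Qed.

Lemma ph_traj_gt0 t u v : 0 < p0 u v -> 0 < ph (S t) u v.
Proof.
move=> h; elim: t => [//|t IH] /=; rewrite mulr_gt0 //.
by rewrite -addrA ltr_pwDl // addr_ge0 ?fedge_traj_ge0 ?bedge_traj_ge0.
Qed.

End Dynamics.

(* The fraction of a flow that survives the interior vertices of [s :: q]. *)
Definition transmission (R : pzRingType) (V : eqType) (l : V -> R) (s : V) (q : seq V) : R :=
  \prod_(1 <= i < size q) (1 - l (pvert s q i)).

Lemma transmission_in01 (R : realDomainType) (V : eqType) (l : V -> R) (s : V) (q : seq V) :
  (forall v, 0 <= l v <= 1) -> 0 <= transmission l s q <= 1.
Proof.
move=> hl; have hl1 v : 0 <= 1 - l v <= 1.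
  by have /andP[? ?] := hl v; apply/andP; split; lra.
apply/andP; split; last by apply: prodr_ile1 => i _; apply: hl1.
by apply: prodr_ge0 => i _; case/andP: (hl1 (pvert s q i)).
Qed.

Lemma pathleak_transmission (R : realType) (V : eqType) (s d : V) (q : seq V) (l : V -> R) :
  simple_path s d q -> pathleak l d q = 1 - transmission l s q.
Proof.
move=> hq; rewrite /pathleak /transmission; congr (_ - _).
have := simple_path_size hq; have := pvert_eq_d hq; have := pvert_last hq.
case e: (size q) => [|L] // Ld hd _.
rewrite (big_nth s) big_mkcond e big_nat_recr //= -[nth s q L]/(pvert s q L.+1) Ld eqxx mulr1.
rewrite big_add1; apply: eq_big_nat => i /andP[_ hi].
rewrite -[nth s q i]/(pvert s q i.+1).
by case: ifP => // /negbFE /eqP /(hd i.+1 (ltnW hi)) [] /eqP; rewrite ltn_eqF.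
Qed.

Section Transport.
Variables (R : realType) (V : finType) (E : rel V) (s d : V) (l : V -> R)
  (delta fbar bbar : R) (p0 : V -> V -> R) (f0 b0 : V -> R) (q r : seq V).
Hypotheses (hq : simple_path s d q)
  (disj : forall x, x \in q -> x \in r -> x = d)
  (hE : forall u v, E u v = path_edge s q u v || path_edge s r u v).

Local Notation S t := (traj E s d l delta (fun _ => fbar) (fun _ => bbar) p0 f0 b0 t).
Local Notation w := (pvert s q).

Lemma forward_transport j t : (j < size q)%N ->
  fedge E (S (t + j)) (w j) (w j.+1) =
  fedge E (S t) s (w 1) * \prod_(1 <= i < j.+1) (1 - l (w i)).
Proof.
elim: j t => [|j IH] t hj; first by rewrite addn0 big_geq // mulr1.
rewrite addnS {1}/fedge (path_edge_E hq hE hj) (outdeg_interior hq disj hE) // eqxx.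
rewrite /= (negbTE (pvert_neq_s hq _ (ltnW hj))) //.
rewrite (big_pred1 (w j)); last by move=> z; rewrite (in_interior hq disj hE).
by rewrite IH 1?ltnW // [in RHS]big_nat_recr //=; ring.
Qed.

Lemma backward_transport n j t : (j + n < size q)%N ->
  bedge E (S (t + n)) (w j) (w j.+1) =
  bedge E (S t) (w (j + n)) (w (j + n).+1) * \prod_(j.+1 <= i < (j + n).+1) (1 - l (w i)).
Proof.
elim: n j t => [|n IH] j t hj; first by rewrite !addn0 big_geq // mulr1.
have j1L : (j.+1 < size q)%N by lia.
rewrite addnS {1}/bedge (path_edge_E hq hE (ltnW j1L)) (indeg_interior hq disj hE) // eqxx.
rewrite /= (negbTE (pvert_neq_d hq j1L)).
rewrite (big_pred1 (w j.+2)); last by move=> z; rewrite (out_interior hq disj hE).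
rewrite IH; last by rewrite addSnnS.
by rewrite -addSnnS [in RHS]big_ltn; [ring | lia].
Qed.

Lemma forward_arrival t :
  fedge E (S (t + (size q).-1)) (w (size q).-1) d = fedge E (S t) s (w 1) * transmission l s q.
Proof.
have [qL qS] := last_edge_index hq.
by have := forward_transport t qL; rewrite qS (pvert_last hq).
Qed.

Lemma backward_arrival t :
  bedge E (S (t + (size q).-1)) s (w 1) = bedge E (S t) (w (size q).-1) d * transmission l s q.
Proof.
have [qL qS] := last_edge_index hq.
by have := backward_transport (j := 0) t qL; rewrite add0n qS (pvert_last hq).
Qed.

End Transport.

Section ParallelPaths.
Variables (R : realType) (V : finType) (E : rel V) (s d : V) (p1 p2 : seq V)
  (l : V -> R) (delta fbar bbar : R) (p0 : V -> V -> R) (f0 b0 : V -> R).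
Hypotheses (hG : two_parallel_paths E s d p1 p2) (hl : forall v, 0 <= l v <= 1)
  (hdelta : 0 < delta < 1) (hfbar : 0 < fbar) (hbbar : 0 < bbar)
  (hp0 : forall u v, E u v -> 0 <= p0 u v)
  (hp1 : forall u v, path_edge s p1 u v -> 0 < p0 u v)
  (hf0 : forall v, 0 <= f0 v) (hb0 : forall v, 0 <= b0 v)
  (hleak : pathleak l d p1 < pathleak l d p2).

Local Notation S t := (traj E s d l delta (fun _ => fbar) (fun _ => bbar) p0 f0 b0 t).
Local Notation w1 := (pvert s p1).
Local Notation w2 := (pvert s p2).
Local Notation L1 := (size p1).-1.
Local Notation L2 := (size p2).-1.

Local Notation A t := (ph (S t) s (w1 1)).
Local Notation B t := (ph (S t) s (w2 1)).
Local Notation C t := (ph (S t) (w1 L1) d).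
Local Notation D t := (ph (S t) (w2 L2) d).
Local Notation x t := (share (A t) (B t)).
Local Notation y t := (share (C t) (D t)).

Lemma path1 : simple_path s d p1. Proof. by case: hG => ? [[]]. Qed.
Lemma path2 : simple_path s d p2. Proof. by case: hG => ? [_ []]. Qed.
Lemma disj12 x : x \in p1 -> x \in p2 -> x = d. Proof. by case: hG => _ [_ _ h _ _]; apply: h. Qed.
Lemma disj21 x : x \in p2 -> x \in p1 -> x = d. Proof. by move=> *; apply: disj12. Qed.
Lemma edges12 u v : E u v = path_edge s p1 u v || path_edge s p2 u v.
Proof. by case: hG => _ [_ _ _ h _]. Qed.
Lemma edges21 u v : E u v = path_edge s p2 u v || path_edge s p1 u v.
Proof. by rewrite orbC edges12. Qed.

Lemma transmission_lt : transmission l s p2 < transmission l s p1.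
Proof.
by move: hleak; rewrite (pathleak_transmission l path1) (pathleak_transmission l path2); lra.
Qed.

(* If both paths were the single edge (s, d) their transmissions would agree. *)
Lemma not_single_edges : ~ (size p1 = 1 /\ size p2 = 1)%N.
Proof.
move=> [e1 e2]; move: transmission_lt.
by rewrite /transmission e1 e2 !big_geq // ltxx.
Qed.

Lemma ph_path1_gt0 t j : (j < size p1)%N -> 0 < ph (S t) (w1 j) (w1 j.+1).
Proof.
move=> hj; have [dl0 _] := andP hdelta.
apply: (ph_traj_gt0 s d hl dl0 (ltW hfbar) (ltW hbbar) hp0 hf0 hb0).
by apply: hp1; apply/path_edgeP; exists j.
Qed.

Lemma ph_path2_ge0 t j : (j < size p2)%N -> 0 <= ph (S t) (w2 j) (w2 j.+1).
Proof.
move=> hj; have [dl0 _] := andP hdelta.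
apply: (ph_traj_ge0 s d hl dl0 (ltW hfbar) (ltW hbbar) hp0 hf0 hb0).
exact: (path_edge_E path2 edges21).
Qed.

Lemma A_gt0 t : 0 < A t. Proof. exact: ph_path1_gt0 (simple_path_size path1). Qed.
Lemma B_ge0 t : 0 <= B t. Proof. exact: ph_path2_ge0 (simple_path_size path2). Qed.
Lemma C_gt0 t : 0 < C t.
Proof.
by have [h e] := last_edge_index path1; have := ph_path1_gt0 t h; rewrite e (pvert_last path1).
Qed.
Lemma D_ge0 t : 0 <= D t.
Proof.
by have [h e] := last_edge_index path2; have := ph_path2_ge0 t h; rewrite e (pvert_last path2).
Qed.

Lemma sum_source t : \sum_(z | E s z) ph (S t) s z = A t + B t.
Proof.
apply: sum_pred2; first exact: (source_succ_neq path1 path2 disj12 not_single_edges).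
exact: (out_source path1 path2 edges12).
Qed.

Lemma sum_sink t : \sum_(z | E z d) ph (S t) z d = C t + D t.
Proof.
apply: sum_pred2; first exact: (sink_pred_neq path1 path2 disj12 not_single_edges).
exact: (in_sink path1 path2 edges12).
Qed.

Lemma source_split t :
  fedge E (S t) s (w1 1) = fbar * x t /\ fedge E (S t) s (w2 1) = fbar * (1 - x t).
Proof.
have ne := source_succ_neq path1 path2 disj12 not_single_edges.
have out z : E s z = (z == w1 1) || (z == w2 1) := out_source path1 path2 edges12 z.
have deg : outdeg E s = 2%N by apply: card_pred2 ne _.
have AB : A t + B t != 0 by apply: lt0r_neq0; have := A_gt0 t; have := B_ge0 t; lra.
rewrite /fedge !out !eqxx orbT deg /= fw_source sum_source /share.
by split; [rewrite mulrA | rewrite -mulrA; congr (_ * _); field].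
Qed.

Lemma sink_split t :
  bedge E (S t) (w1 L1) d = bbar * y t /\ bedge E (S t) (w2 L2) d = bbar * (1 - y t).
Proof.
have ne := sink_pred_neq path1 path2 disj12 not_single_edges.
have inc z : E z d = (z == w1 L1) || (z == w2 L2) := in_sink path1 path2 edges12 z.
have deg : indeg E d = 2%N by apply: card_pred2 ne _.
have CD : C t + D t != 0 by apply: lt0r_neq0; have := C_gt0 t; have := D_ge0 t; lra.
rewrite /bedge !inc !eqxx orbT deg /= bw_sink sum_sink /share.
by split; [rewrite mulrA | rewrite -mulrA; congr (_ * _); field].
Qed.

Local Notation a1 := (transmission l s p1).
Local Notation a2 := (transmission l s p2).

(* Flows cross path i in L_i steps, so from time max(L1, L2) on the four
   endpoint pheromones obey the coupled recursion of [CoupledRecursion]. *)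
Lemma endpoint_recursion t : (maxn L1 L2 <= t)%N ->
  [/\ A t.+1 = delta * (A t + fbar * x t + bbar * a1 * y (t - L1)),
      B t.+1 = delta * (B t + fbar * (1 - x t) + bbar * a2 * (1 - y (t - L2))),
      C t.+1 = delta * (C t + bbar * y t + fbar * a1 * x (t - L1)) &
      D t.+1 = delta * (D t + bbar * (1 - y t) + fbar * a2 * (1 - x (t - L2)))].
Proof.
rewrite geq_max => /andP[e1 e2].
have fa1 := forward_arrival l delta fbar bbar p0 f0 b0 path1 disj12 edges12 (t - L1).
have fa2 := forward_arrival l delta fbar bbar p0 f0 b0 path2 disj21 edges21 (t - L2).
have ba1 := backward_arrival l delta fbar bbar p0 f0 b0 path1 disj12 edges12 (t - L1).
have ba2 := backward_arrival l delta fbar bbar p0 f0 b0 path2 disj21 edges21 (t - L2).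
rewrite subnK // in fa1 ba1; rewrite subnK // in fa2 ba2.
have [fs1 fs2] := source_split t; have [bd1 bd2] := sink_split t.
split => /=.
- by rewrite fs1 ba1 (sink_split _).1; ring.
- by rewrite fs2 ba2 (sink_split _).2; ring.
- by rewrite bd1 fa1 (source_split _).1; ring.
- by rewrite bd2 fa2 (source_split _).2; ring.
Qed.

Lemma endpoint_convergence : exists C1 C2 : R, 0 < C1 /\ 0 < C2 /\
  forall eps : R, 0 < eps < 1 ->
  forall t : nat, C1 + C2 * ln (eps^-1) <= t%:R -> 1 - eps <= x t /\ 1 - eps <= y t.
Proof.
have [a20 _] := andP (transmission_in01 s p2 hl).
have [_ a11] := andP (transmission_in01 s p1 hl).
apply: (coupled_convergence (f := fbar) (b := bbar) (a1 := a1) (a2 := a2) (dl := delta)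
  (k1 := L1) (k2 := L2) (K := maxn L1 L2)).
- by split => //; rewrite a20 transmission_lt.
- exact: leq_maxl.
- exact: leq_maxr.
- exact: A_gt0.
- exact: B_ge0.
- exact: C_gt0.
- exact: D_ge0.
- exact: endpoint_recursion.
Qed.

(* On the edges of [p1] the normalized pheromones are at least x (forward)
   and y (backward): they equal them at the endpoints and 1 inside. *)
Lemma nuf_path1 t u v : path_edge s p1 u v -> x t <= nuf E (S t) u v.
Proof.
case/path_edgeP => -[|j] [hj -> ->]; first by rewrite /nuf sum_source.
have hp := ph_path1_gt0 t hj.
rewrite /nuf (big_pred1 (w1 j.+2)) => [|z]; last exact: (out_interior path1 disj12 edges12).
by rewrite divff ?lt0r_neq0 //; case/andP: (share_in01 (A_gt0 t) (B_ge0 t)).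
Qed.

Lemma nub_path1 t u v : path_edge s p1 u v -> y t <= nub E (S t) u v.
Proof.
case/path_edgeP => j [hj -> ->]; have hp := ph_path1_gt0 t hj.
case: (ltngtP j.+1 (size p1)) => [hj1|hj1|hj1].
- rewrite /nub (big_pred1 (w1 j)) => [|z]; last exact: (in_interior path1 disj12 edges12).
  by rewrite divff ?lt0r_neq0 //; case/andP: (share_in01 (C_gt0 t) (D_ge0 t)).
- by rewrite ltnNge hj in hj1.
- have -> : j = L1 by rewrite -hj1.
  by rewrite (last_edge_index path1).2 (pvert_last path1) /nub sum_sink.
Qed.

End ParallelPaths.

Theorem theorem1 (R : realType) (V : finType) (E : rel V) (s d : V)
    (p1 p2 : seq V) (l : V -> R) (delta fbar bbar : R)
    (p0 : V -> V -> R) (f0 b0 : V -> R) :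
  two_parallel_paths E s d p1 p2 ->
  (forall v, 0 <= l v <= 1) ->
  0 < delta < 1 ->
  0 < fbar -> 0 < bbar ->
  (forall u v, E u v -> 0 <= p0 u v) ->
  (forall u v, path_edge s p1 u v -> 0 < p0 u v) ->
  (forall v, 0 <= f0 v) -> (forall v, 0 <= b0 v) ->
  pathleak l d p1 < pathleak l d p2 ->
  exists C1 C2 : R, 0 < C1 /\ 0 < C2 /\
    forall eps : R, 0 < eps < 1 ->
    forall t : nat, C1 + C2 * ln (eps^-1) <= t%:R ->
    forall u v, path_edge s p1 u v ->
      let st := traj E s d l delta (fun _ => fbar) (fun _ => bbar) p0 f0 b0 t in
      1 - eps <= nuf E st u v /\ 1 - eps <= nub E st u v.
Proof.
move=> hG hl hdelta hfbar hbbar hp0 hp1 hf0 hb0 hleak.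
have [C1 [C2 [C10 [C20 conv]]]] :=
  endpoint_convergence hG hl hdelta hfbar hbbar hp0 hp1 hf0 hb0 hleak.
exists C1, C2; do 2!split => //.
move=> eps heps t ht u v huv /=; have [hx hy] := conv eps heps t ht.
split.
- exact: le_trans hx (nuf_path1 hG hl hdelta hfbar hbbar hp0 hp1 hf0 hb0 hleak t huv).
- exact: le_trans hy (nub_path1 hG hl hdelta hfbar hbbar hp0 hp1 hf0 hb0 hleak t huv).
Qed.
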